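(* Let $\langle \mathsf{E}, \mathsf{po}, \mathsf{mo}\rangle$ be a partial 1-Writer execution graph in which $\mathsf{mo}$ agrees with $\mathsf{po}$, and let $\mathsf{rf}_1,\mathsf{rf}_2$ be two reads-from relations over it. (1) If $\mathsf{rf}_1 \sqsubseteq \mathsf{rf}_2$ and $\mathsf{po}\cup\mathsf{rf}_1$ has a cycle, then $\mathsf{po}\cup\mathsf{rf}_2$ has a cycle. (2) If both $\mathsf{rf}_1$ and $\mathsf{rf}_2$ satisfy weak-read-coherence, then $\min(\mathsf{rf}_1,\mathsf{rf}_2)$ also satisfies weak-read-coherence.
   Context: Events are reads $\mathtt{r}(x,v)$ or writes $\mathtt{w}(x,v)$ on a variable $x$ with value $v$, each belonging to a thread; $\mathsf{po}$ (program order) is a strict partial order totally ordering the events of each thread and relating no events of different threads. The graph is 1-Writer: for every variable $x$ all writes to $x$ lie in a single thread. $\mathsf{mo}=\bigcup_x\mathsf{mo}_x$ with $\mathsf{mo}_x$ a strict total order on writes to $x$, and ''agrees with $\mathsf{po}$'' means $w\,\mathsf{mo}\,w'$ implies $w\,\mathsf{po}\,w'$. A reads-from relation $\mathsf{rf}$ maps every read $r$ to a unique write $\mathsf{rf}^{-1}(r)$ with the same variable and value. For reads-from relations, $\mathsf{rf}_1\sqsubseteq\mathsf{rf}_2$ iff for every read $r$, $\mathsf{rf}_1^{-1}(r)\,\mathsf{po}^*\,\mathsf{rf}_2^{-1}(r)$ (reflexive-transitive closure). $\min(\mathsf{rf}_1,\mathsf{rf}_2)$ is the reads-from relation mapping every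 read $r$ to the $\mathsf{po}$-smaller of $\mathsf{rf}_1^{-1}(r)$ and $\mathsf{rf}_2^{-1}(r)$ (these lie in the same writer thread). $\mathsf{rf}$ satisfies weak-read-coherence if, with $\mathsf{hb}=(\mathsf{po}\cup\mathsf{rf})^+$, there is no read $r$ of a variable $x$ and writes $w,w'$ of $x$ with $w\,\mathsf{rf}\,r$, $w\,\mathsf{hb}\,w'$ and $w'\,\mathsf{hb}\,r$. *)

From Stdlib Require Import Relations.
From mathcomp Require Import all_boot.
Set Implicit Arguments. Unset Strict Implicit. Unset Printing Implicit Defensive.

Record exec (E : finType) := Exec {
  thread : E -> nat;
  loc : E -> nat;
  val : E -> nat;
  is_write : E -> bool;
  po : rel E;
  mo : rel E
}.

Section Defs.
Variables (E : finType) (G : exec E).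

Definition is_read (e : E) : bool := ~~ is_write G e.

Definition po_ok : Prop :=
  (forall e, ~~ po G e e) /\
  (forall a b c, po G a b -> po G b c -> po G a c) /\
  (forall a b, thread G a = thread G b -> a <> b -> po G a b \/ po G b a) /\
  (forall a b, po G a b -> thread G a = thread G b).

Definition one_writer : Prop :=
  forall w w', is_write G w -> is_write G w' -> loc G w = loc G w' ->
    thread G w = thread G w'.

Definition mo_ok : Prop :=
  (forall a b, mo G a b -> [/\ is_write G a, is_write G b & loc G a = loc G b]) /\
  (forall e, ~~ mo G e e) /\
  (forall a b c, mo G a b -> mo G b c -> mo G a c) /\
  (forall a b, is_write G a -> is_write G b -> loc G a = loc G b -> a <> b ->
     mo G a b \/ mo G b a).

Definition exec_wf : Prop := [/\ po_ok, one_writer & mo_ok].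

Definition mo_agrees_po : Prop := forall w w', mo G w w' -> po G w w'.

(* A reads-from relation is given by the function f : r |-> rf^{-1}(r)
   (values of f on writes are irrelevant). *)
Definition is_rf (f : E -> E) : Prop :=
  forall r, is_read r ->
    [/\ is_write G (f r), loc G (f r) = loc G r & val G (f r) = val G r].

Definition rf_rel (f : E -> E) (w r : E) : Prop := is_read r /\ f r = w.

(* reflexive-transitive closure of po (po is transitive) *)
Definition po_star (a b : E) : Prop := a = b \/ po G a b.

Definition rf_le (f1 f2 : E -> E) : Prop :=
  forall r, is_read r -> po_star (f1 r) (f2 r).

Definition rf_min (f1 f2 : E -> E) (r : E) : E :=
  if po G (f2 r) (f1 r) then f2 r else f1 r.

Definition hb (f : E -> E) : E -> E -> Prop :=
  clos_trans E (fun a b => po G a b \/ rf_rel f a b).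

Definition has_cycle (f : E -> E) : Prop := exists e, hb f e e.

Definition weak_read_coherent (f : E -> E) : Prop :=
  ~ (exists r w w',
       [/\ is_read r, is_write G w, is_write G w',
           loc G w = loc G r &
           [/\ loc G w' = loc G r, rf_rel f w r, hb f w w' & hb f w' r]]).

End Defs.

(* Replacing an rf source by a po-later write of the same thread preserves
   hb: the old rf edge factors as a po edge followed by the new rf edge.
   Hence (po ∪ rf)-cycles survive moving sources po-later.  The minimum of
   two reads-from relations lies po-below both (this needs 1-Writer and
   totality of po on threads, so that the two sources are comparable), and
   at each read it coincides with one of them; a weak-read-coherence
   violation of the minimum is thus a violation of rf1 or of rf2.  Neither
   part uses the modification order. *)
From Stdlib Require Import Relations.
From mathcomp Require Import all_boot.

Section HappensBefore.
Variables (E : finType) (G : exec E).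

Lemma hb_mono (f g : E -> E) a b :
  rf_le G f g -> hb G f a b -> hb G g a b.
Proof.
move=> le_fg; elim=> {a b} [a b [po_ab | [read_b fb]] | a b c _ IH1 _ IH2].
- by apply: t_step; left.
- rewrite -fb; case: (le_fg b read_b) => [-> | po_ag].
  + by apply: t_step; right.
  + by apply: (t_trans _ _ _ (g b)); apply: t_step; [left | right].
- exact: t_trans IH1 IH2.
Qed.

Lemma has_cycle_mono (f g : E -> E) :
  rf_le G f g -> has_cycle G f -> has_cycle G g.
Proof. by move=> le_fg [e cyc]; exists e; exact: hb_mono cyc. Qed.

Lemma rf_min_le_l (f1 f2 : E -> E) : rf_le G (rf_min G f1 f2) f1.
Proof. by move=> r _; rewrite /rf_min /po_star; case: ifP => ?; [right | left]. Qed.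

Hypothesis po_total_thread :
  forall {a b}, thread G a = thread G b -> a <> b -> po G a b \/ po G b a.
Hypothesis writer1 : one_writer G.

Lemma rf_min_le_r (f1 f2 : E -> E) :
  is_rf G f1 -> is_rf G f2 -> rf_le G (rf_min G f1 f2) f2.
Proof.
move=> rf1 rf2 r read_r; rewrite /rf_min /po_star.
case: ifP => [_ | po21]; first by left.
have [w1 l1 _] := rf1 r read_r; have [w2 l2 _] := rf2 r read_r.
have same_thread := writer1 _ _ w1 w2 (etrans l1 (esym l2)).
have [-> | ne12] := eqVneq (f1 r) (f2 r); first by left.
case: (po_total_thread same_thread (elimN eqP ne12)) => [po12 | po21'].
- by right.
- by rewrite po21' in po21.
Qed.

End HappensBefore.

Theorem lemma3 (E : finType) (G : exec E) (rf1 rf2 : E -> E) :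
  exec_wf G -> mo_agrees_po G -> is_rf G rf1 -> is_rf G rf2 ->
  (rf_le G rf1 rf2 -> has_cycle G rf1 -> has_cycle G rf2) /\
  (weak_read_coherent G rf1 -> weak_read_coherent G rf2 ->
   weak_read_coherent G (rf_min G rf1 rf2)).
Proof.
move=> [[_ [_ [po_total _]]] writer1 _] _ is_rf1 is_rf2.
split; first exact: has_cycle_mono.
set f := rf_min G rf1 rf2.
have le_f1 : rf_le G f rf1 by exact: rf_min_le_l.
have le_f2 : rf_le G f rf2 by exact: rf_min_le_r.
move=> wrc1 wrc2 [r [w [w' [read_r write_w write_w' lw [lw' [_ fr] hb_ww' hb_w'r]]]]].
have violates g : rf_le G f g -> g r = w -> ~ weak_read_coherent G g.
  move=> le_fg gr; apply; exists r, w, w'; split=> //; split=> //.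
  - exact: hb_mono le_fg hb_ww'.
  - exact: hb_mono le_fg hb_w'r.
move: fr; rewrite /f /rf_min; case: ifP => _ fr.
- exact: violates le_f2 fr wrc2.
- exact: violates le_f1 fr wrc1.
Qed.
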